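(* Let $(\mathcal{F},w,s)$ be a balanced system on $n$ elements, with $\mathcal{F}=(F_1,\dots,F_m)$, and let $G=(V,E)$ be a directed graph. Let $f$ be the partitioning produced by the BISP algorithm with this system: (i) for every vertex $v$ choose $l(v)\in[m]$ independently with $\mathbb{P}(l(v)=i)=w_i$; (ii) for every edge $(v,u)\in E$ choose $f(v,u)\in[n]$ independently with $\mathbb{P}(f(v,u)=p)=s_{l(v)l(u)p}$. Suppose $|V|\to\infty$, $|E|/|V|\to\infty$ and $n=o\big((|E|/|V|)^{1/2}\big)$. Then for every $\varepsilon>0$, $\mathbb{P}(\mathrm{ib}(f)\le 1+\varepsilon)\to1$.
   Context: A system on $n$ elements is a triple $(\mathcal{F},w,s)$ where $\mathcal{F}=(F_1,\dots,F_m)$ is a collection of subsets of $[n]$, $w\in[0,1]^m$ with $\sum_i w_i=1$, and $s\in[0,1]^{m\times m\times n}$ with $\sum_p s_{ijp}=1$ for all $i,j$. It is balanced if for all $p\in[n]$, $\sum_{i=1}^m\sum_{j=1}^m w_iw_js_{ijp}=1/n$. A graph partitioning of $G=(V,E)$ into the $n$ partitions $[n]$ is a function $f:E\to[n]$; its imbalance is $\mathrm{ib}(f)=\dfrac{\max_{l\in[n]}|\{e\in E: f(e)=l\}|}{|E|/n}$. *)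

From HB Require Import structures.
From mathcomp Require Import all_boot all_order all_algebra.
From mathcomp Require Import all_classical all_reals all_analysis.
Set Implicit Arguments. Unset Strict Implicit. Unset Printing Implicit Defensive.
Import Order.TTheory GRing.Theory Num.Theory.
Local Open Scope ring_scope.

Definition edge_t (V : finType) (E : {set V * V}) : finType :=
  {e : V * V | e \in E}.

Definition is_system (R : realFieldType) (n m : nat)
  (F : 'I_m -> {set 'I_n}) (w : 'I_m -> R) (s : 'I_m -> 'I_m -> 'I_n -> R) : Prop :=
  (forall i, 0 <= w i <= 1) /\ (\sum_(i < m) w i = 1) /\
  (forall i j p, 0 <= s i j p <= 1) /\ (forall i j, \sum_(p < n) s i j p = 1).

Definition balanced (R : realFieldType) (n m : nat)
  (w : 'I_m -> R) (s : 'I_m -> 'I_m -> 'I_n -> R) : Prop :=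
  forall p : 'I_n, \sum_(i < m) \sum_(j < m) w i * w j * s i j p = (n%:R)^-1.

Definition ib (R : realFieldType) (V : finType) (E : {set V * V}) (n : nat)
  (f : {ffun edge_t E -> 'I_n}) : R :=
  (\max_(l < n) #|[set e | f e == l]|)%N%:R / (#|E|%:R / n%:R).

(* Probability that the BISP partitioning f satisfies A:
   l : V -> [m] drawn with P(l v = i) = w i independently,
   then f(v,u) drawn independently with P(f(v,u) = p) = s (l v) (l u) p. *)
Definition bisp_prob (R : realFieldType) (V : finType) (E : {set V * V})
  (n m : nat) (w : 'I_m -> R) (s : 'I_m -> 'I_m -> 'I_n -> R)
  (A : pred {ffun edge_t E -> 'I_n}) : R :=
  \sum_(l : {ffun V -> 'I_m})
     (\prod_(v : V) w (l v)) *
     \sum_(f : {ffun edge_t E -> 'I_n} | A f)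
        \prod_(e : edge_t E) s (l (val e).1) (l (val e).2) (f e).

(* Chebyshev's inequality, part by part.  Let Y_p count the non-loop edges
   sent to part p.  The two endpoints of a non-loop edge are labelled
   independently, so by balance the edge lands in p with probability
   sum_ij w_i w_j s_ijp = 1/n; two edges without a common endpoint land
   there jointly with probability 1/n^2.  An edge shares an endpoint with
   at most 4|V| edges, hence Var Y_p <= 4|V||E|/n.  There are at most |V|
   loops, so ib(f) > 1 + eps forces Y_p >= E[Y_p] + eps|E|/(2n) for some p
   once 2n^2|V| <= eps|E|, and a union bound over the n parts gives
   P(ib(f) > 1 + eps) <= 16 n^2 |V| / (eps^2 |E|) -> 0. *)
From HB Require Import structures.
From mathcomp Require Import all_boot all_order all_algebra.
From mathcomp Require Import all_classical all_reals all_analysis.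
From mathcomp Require Import ring lra.
Import Order.TTheory GRing.Theory Num.Theory.
Import numFieldNormedType.Exports.
Local Open Scope ring_scope.
Set Implicit Arguments. Unset Strict Implicit. Unset Printing Implicit Defensive.

Section ProductExpectation.
Variables (R : comRingType) (I J : finType) (q : I -> J -> R).

Definition Eprod (G : {ffun I -> J} -> R) : R :=
  \sum_(f : {ffun I -> J}) (\prod_i q i (f i)) * G f.

Lemma eq_Eprod G H : G =1 H -> Eprod G = Eprod H.
Proof. by move=> eqGH; apply: eq_bigr => f _; rewrite eqGH. Qed.

Lemma EprodD G H : Eprod (fun f => G f + H f) = Eprod G + Eprod H.
Proof. by rewrite -big_split; apply: eq_bigr => f _; rewrite mulrDr. Qed.

Lemma EprodZ c G : Eprod (fun f => c * G f) = c * Eprod G.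
Proof. by rewrite mulr_sumr; apply: eq_bigr => f _; rewrite mulrCA. Qed.

Lemma Eprod_sum (K : finType) (P : pred K) (G : K -> {ffun I -> J} -> R) :
  Eprod (fun f => \sum_(k | P k) G k f) = \sum_(k | P k) Eprod (G k).
Proof.
rewrite exchange_big; apply: eq_bigr => f _; exact: mulr_sumr.
Qed.

Lemma Eprod_prod (phi : I -> J -> R) :
  Eprod (fun f => \prod_i phi i (f i)) = \prod_i \sum_j q i j * phi i j.
Proof.
by rewrite bigA_distr_bigA; apply: eq_bigr => f _; rewrite big_split.
Qed.

Hypothesis q_sum1 : forall i, \sum_j q i j = 1.

Lemma sum_prod_ffun1 : \sum_(f : {ffun I -> J}) \prod_i q i (f i) = 1.
Proof. by rewrite -bigA_distr_bigA big1. Qed.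

Lemma Eprod1 : Eprod (fun _ => 1) = 1.
Proof. by rewrite -[RHS]sum_prod_ffun1; apply: eq_bigr => f _; rewrite mulr1. Qed.

Lemma Eprod_coord a (G : J -> R) : Eprod (fun f => G (f a)) = \sum_j q a j * G j.
Proof.
pose phi i j := if i == a then G j else 1.
rewrite (eq_Eprod (H := fun f => \prod_i phi i (f i))) => [|f]; last first.
  by rewrite -big_mkcond big_pred1_eq.
rewrite Eprod_prod (bigD1 a) //= [X in _ * X]big1 ?mulr1 => [|i /negbTE nai].
  by under eq_bigr do rewrite /phi eqxx.
by under eq_bigr do rewrite /phi nai mulr1.
Qed.

Lemma Eprod_coord_eq a x : Eprod (fun f => (f a == x)%:R) = q a x.
Proof.
rewrite (Eprod_coord a (fun j => (j == x)%:R)).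
by under eq_bigr do rewrite mulr_natr mulrb; rewrite -big_mkcond big_pred1_eq.
Qed.

Definition ffun_mix (A : {set I}) (f g : {ffun I -> J}) : {ffun I -> J} :=
  [ffun i => if i \in A then f i else g i].

Lemma ffun_mixK A f g : ffun_mix A (ffun_mix A f g) (ffun_mix A g f) = f.
Proof. by apply/ffunP => i; rewrite !ffunE; case: (i \in A). Qed.

Lemma prod_ffun_mix A f g :
  (\prod_i q i (ffun_mix A f g i)) * \prod_i q i (ffun_mix A g f i)
  = (\prod_i q i (f i)) * \prod_i q i (g i).
Proof.
rewrite -!big_split; apply: eq_bigr => i _ /=.
by rewrite !ffunE; case: (i \in A); rewrite // mulrC.
Qed.

(* Exchanging the coordinates of two independent samples outside A is a
   measure-preserving involution of pairs, which decouples G and H. *)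
Lemma Eprod_indep (A : {set I}) (G H : {ffun I -> J} -> R) :
  (forall f g : {ffun I -> J}, {in A, f =1 g} -> G f = G g) ->
  (forall f g : {ffun I -> J}, {in ~: A, f =1 g} -> H f = H g) ->
  Eprod (fun f => G f * H f) = Eprod G * Eprod H.
Proof.
move=> GA HA.
pose swap (fg : {ffun I -> J} * {ffun I -> J}) :=
  (ffun_mix A fg.1 fg.2, ffun_mix A fg.2 fg.1).
have swap_inj : injective swap.
  by apply: inv_inj => -[f g]; rewrite /swap /= !ffun_mixK.
symmetry; rewrite /Eprod mulr_suml; under eq_bigr do rewrite mulr_sumr.
rewrite pair_bigA (reindex_inj swap_inj) /=.
pose P (f : {ffun I -> J}) := \prod_i q i (f i).
transitivity (\sum_(fg : {ffun I -> J} * {ffun I -> J})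
                P fg.2 * (P fg.1 * (G fg.1 * H fg.1))).
  apply: eq_bigr => -[f g] _ /=.
  have -> : G (ffun_mix A f g) = G f by apply: GA => i iA; rewrite ffunE iA.
  have -> : H (ffun_mix A g f) = H f.
    by apply: HA => i; rewrite inE ffunE => /negbTE ->.
  by rewrite mulrACA prod_ffun_mix /P; ring.
rewrite -(pair_bigA _ (fun f g => P g * (P f * (G f * H f)))) /=.
apply: eq_bigr => f _; rewrite -mulr_suml.
by rewrite /P sum_prod_ffun1 mul1r.
Qed.

Lemma Eprod_pair a b (H : J -> J -> R) : a != b ->
  Eprod (fun f => H (f a) (f b)) = \sum_x \sum_y q a x * q b y * H x y.
Proof.
move=> nab.
rewrite (eq_Eprod (H := fun f => \sum_x (f a == x)%:R * H x (f b))) => [|f]; last first.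
  by under eq_bigr do rewrite eq_sym mulr_natl mulrb; rewrite -big_mkcond big_pred1_eq.
rewrite Eprod_sum; apply: eq_bigr => x _.
rewrite (Eprod_indep (A := [set a])); last 2 first.
- by move=> f g fg; rewrite fg ?inE.
- by move=> f g fg; rewrite fg // !inE eq_sym.
rewrite Eprod_coord_eq (Eprod_coord b (H x)) mulr_sumr.
by under eq_bigr do rewrite mulrA.
Qed.

End ProductExpectation.

Lemma Eprod_le (R : numDomainType) (I J : finType) (q : I -> J -> R) G H :
  (forall i j, 0 <= q i j) -> (forall f, G f <= H f) -> Eprod q G <= Eprod q H.
Proof.
move=> q_ge0 GH; apply: ler_sum => f _; apply: ler_wpM2l (GH f).
exact: prodr_ge0.
Qed.

Lemma sum_indicator (R : numDomainType) (T : finType) (P : pred T) :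
  \sum_t ((P t)%:R : R) = #|[set t | P t]|%:R.
Proof.
rewrite -sum1dep_card natr_sum [RHS]big_mkcond.
by apply: eq_bigr => t _; case: (P t).
Qed.

Lemma ler_sum_pred (R : numDomainType) (I : finType) (P : pred I) (G : I -> R) :
  (forall i, 0 <= G i) -> \sum_(i | P i) G i <= \sum_i G i.
Proof. by move=> G_ge0; rewrite [X in _ <= X](bigID P) /= lerDl sumr_ge0. Qed.

Section Graph.
Variables (V : finType) (E : {set V * V}).

Local Notation edge := (edge_t E).

Definition src (e : edge) : V := (val e).1.
Definition dst (e : edge) : V := (val e).2.
Definition endpoints (e : edge) : {set V} := [set src e; dst e].
Definition adjacent_edges (e e' : edge) : bool :=
  (src e' \in endpoints e) || (dst e' \in endpoints e).

Lemma edge_inj (e e' : edge) : src e = src e' -> dst e = dst e' -> e = e'.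
Proof.
move=> se de; apply: val_inj.
by rewrite [val e]surjective_pairing [val e']surjective_pairing; apply: congr2.
Qed.

Lemma card_edge : #|edge| = #|E|.
Proof. by rewrite card_sig; apply: eq_card. Qed.

Lemma card_edges_from x : (#|[set e : edge | src e == x]| <= #|V|)%N.
Proof.
rewrite -(card_in_imset (f := dst)) ?max_card // => e e'.
by rewrite !inE => /eqP se /eqP se' de; apply: edge_inj; rewrite // se se'.
Qed.

Lemma card_edges_to x : (#|[set e : edge | dst e == x]| <= #|V|)%N.
Proof.
rewrite -(card_in_imset (f := src)) ?max_card // => e e'.
by rewrite !inE => /eqP de /eqP de' se; apply: edge_inj; rewrite // de de'.
Qed.

Lemma card_loops : (#|[set e : edge | src e == dst e]| <= #|V|)%N.
Proof.
rewrite -(card_in_imset (f := src)) ?max_card // => e e'.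
by rewrite !inE => /eqP le /eqP le' se; apply: edge_inj; rewrite // -le -le'.
Qed.

Lemma card_adjacent_edges e : (#|[set e' | adjacent_edges e e']| <= 4 * #|V|)%N.
Proof.
have -> : [set e' | adjacent_edges e e'] =
    ([set e' | src e' == src e] :|: [set e' | src e' == dst e]) :|:
    ([set e' | dst e' == src e] :|: [set e' | dst e' == dst e]).
  by apply/setP => e'; rewrite !inE /adjacent_edges !inE !orbA.
have -> : (4 * #|V| = #|V| + #|V| + (#|V| + #|V|))%N.
  by rewrite !mulSn mul0n addn0 !addnA.
do 2 (apply: leq_trans (leq_card_setU _ _) _; apply: leq_add);
  by [exact: card_edges_from | exact: card_edges_to].
Qed.

End Graph.

Section BISP.
Variables (R : realFieldType) (V : finType) (E : {set V * V}) (n m : nat).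
Variables (F : 'I_m -> {set 'I_n}) (w : 'I_m -> R) (s : 'I_m -> 'I_m -> 'I_n -> R).
Hypothesis hsys : is_system F w s.
Hypothesis hbal : balanced w s.

Local Notation edge := (edge_t E).
Local Notation labelling := {ffun V -> 'I_m}.
Local Notation partitioning := {ffun edge -> 'I_n}.

Lemma w_ge0 i : 0 <= w i. Proof. by case: hsys => w01 _; case/andP: (w01 i). Qed.
Lemma s_ge0 i j p : 0 <= s i j p.
Proof. by case: hsys => _ [_ [s01 _]]; case/andP: (s01 i j p). Qed.
Lemma sum_w : \sum_i w i = 1. Proof. by case: hsys => _ []. Qed.
Lemma sum_s i j : \sum_p s i j p = 1. Proof. by case: hsys => _ [_ [_ ->]]. Qed.

Lemma n_gt0 : (0 < n)%N.
Proof.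
have nonempty k (G : 'I_k -> R) : \sum_(i < k) G i = 1 -> (0 < k)%N.
  by case: k G => // G; rewrite big_ord0 => /eqP; rewrite eq_sym oner_eq0.
have m_gt0 := nonempty _ _ sum_w.
exact: nonempty _ _ (sum_s (Ordinal m_gt0) (Ordinal m_gt0)).
Qed.

Definition label_law (v : V) : 'I_m -> R := w.
Definition edge_law (l : labelling) (e : edge) : 'I_n -> R := s (l (src e)) (l (dst e)).

Lemma label_law_sum1 v : \sum_i label_law v i = 1. Proof. exact: sum_w. Qed.
Lemma edge_law_sum1 l e : \sum_p edge_law l e p = 1. Proof. exact: sum_s. Qed.

Definition Ebisp (X : partitioning -> R) : R :=
  Eprod label_law (fun l => Eprod (edge_law l) X).

Lemma bisp_probE (A : pred partitioning) : bisp_prob w s A = Ebisp (fun f => (A f)%:R).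
Proof.
apply: eq_bigr => l _; congr (_ * _); rewrite big_mkcond; apply: eq_bigr => f _.
by case: (A f); rewrite ?mulr1 ?mulr0.
Qed.

Lemma EbispD X Y : Ebisp (fun f => X f + Y f) = Ebisp X + Ebisp Y.
Proof. by rewrite /Ebisp -EprodD; apply: eq_Eprod => l; rewrite EprodD. Qed.

Lemma EbispZ c X : Ebisp (fun f => c * X f) = c * Ebisp X.
Proof. by rewrite /Ebisp -EprodZ; apply: eq_Eprod => l; rewrite EprodZ. Qed.

Lemma Ebisp_sum (K : finType) (P : pred K) (X : K -> partitioning -> R) :
  Ebisp (fun f => \sum_(k | P k) X k f) = \sum_(k | P k) Ebisp (X k).
Proof. by rewrite /Ebisp -Eprod_sum; apply: eq_Eprod => l; rewrite Eprod_sum. Qed.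

Lemma Ebisp1 : Ebisp (fun _ => 1) = 1.
Proof.
rewrite /Ebisp -[RHS](Eprod1 label_law_sum1); apply: eq_Eprod => l.
exact: Eprod1 (edge_law_sum1 l).
Qed.

Lemma Ebisp_le X Y : (forall f, X f <= Y f) -> Ebisp X <= Ebisp Y.
Proof.
move=> XY; apply: Eprod_le => [v i|l]; first exact: w_ge0.
by apply: Eprod_le => // e p; exact: s_ge0.
Qed.

Lemma Elabel_edge_law e p : src e != dst e ->
  Eprod label_law (fun l => edge_law l e p) = n%:R^-1.
Proof.
move=> loopfree; rewrite (Eprod_pair label_law_sum1 (fun i j => s i j p) loopfree).
exact: hbal.
Qed.

Lemma Ebisp_edge e p : src e != dst e -> Ebisp (fun f => (f e == p)%:R) = n%:R^-1.
Proof.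
move=> loopfree; rewrite -(Elabel_edge_law p loopfree); apply: eq_Eprod => l.
exact: Eprod_coord_eq (edge_law_sum1 l) e p.
Qed.

Lemma Ebisp_edge_pair e e' p :
  src e != dst e -> src e' != dst e' -> ~~ adjacent_edges e e' ->
  Ebisp (fun f => (f e == p)%:R * (f e' == p)%:R) = n%:R^-1 * n%:R^-1.
Proof.
move=> loopfree loopfree'; rewrite /adjacent_edges negb_or => /andP[src' dst'].
have ee' : e != e' by apply: contraNneq src' => <-; rewrite !inE eqxx.
rewrite -{1}(Elabel_edge_law p loopfree) -(Elabel_edge_law p loopfree').
rewrite -(Eprod_indep label_law_sum1 (A := endpoints e)); last 2 first.
- by move=> l l' ll'; rewrite /edge_law !ll' // !inE eqxx ?orbT.
- by move=> l l' ll'; rewrite /edge_law !ll' // inE.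
apply: eq_Eprod => l; rewrite (Eprod_indep (edge_law_sum1 l) (A := [set e])); last 2 first.
- by move=> f f' ff'; rewrite ff' ?inE.
- by move=> f f' ff'; rewrite ff' // !inE eq_sym.
by rewrite !(Eprod_coord_eq (edge_law_sum1 l)).
Qed.

Definition loopfree_edges : {set edge} := [set e | src e != dst e].

Definition part_load (p : 'I_n) (f : partitioning) : R :=
  \sum_(e in loopfree_edges) (f e == p)%:R.

Definition mean_load : R := #|loopfree_edges|%:R / n%:R.

Lemma Ebisp_part_load p : Ebisp (part_load p) = mean_load.
Proof.
rewrite Ebisp_sum (eq_bigr (fun _ => n%:R^-1)) => [|e]; last first.
  by rewrite inE => /Ebisp_edge->.
by rewrite sumr_const /mean_load mulrC mulr_natr.
Qed.

Lemma Ebisp_edge_pair_le e e' p : src e != dst e -> src e' != dst e' ->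
  Ebisp (fun f => (f e == p)%:R * (f e' == p)%:R)
    <= n%:R^-1 * n%:R^-1 + (adjacent_edges e e')%:R * n%:R^-1.
Proof.
move=> loopfree loopfree'; case: (boolP (adjacent_edges e e')) => [_|nadj].
  apply: le_trans (_ : Ebisp (fun f => (f e == p)%:R) <= _).
    by apply: Ebisp_le => f; rewrite ler_piMr ?ler0n // lern1 leq_b1.
  by rewrite Ebisp_edge // mul1r lerDr mulr_ge0 ?invr_ge0.
by rewrite Ebisp_edge_pair // mul0r addr0.
Qed.

Lemma Ebisp_part_load_sq p :
  Ebisp (fun f => part_load p f ^+ 2) <= mean_load ^+ 2 + 4 * #|V|%:R * #|E|%:R / n%:R.
Proof.
pose L := loopfree_edges.
have -> : (fun f => part_load p f ^+ 2) =
    (fun f => \sum_(e in L) \sum_(e' in L) (f e == p)%:R * (f e' == p)%:R).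
  by apply/funext => f; rewrite expr2 mulr_suml; apply: eq_bigr => e _; rewrite mulr_sumr.
rewrite Ebisp_sum; under eq_bigr do rewrite Ebisp_sum.
apply: le_trans (_ : \sum_(e in L) \sum_(e' in L)
    (n%:R^-1 * n%:R^-1 + (adjacent_edges e e')%:R * n%:R^-1) <= _).
  apply: ler_sum => e eL; apply: ler_sum => e' e'L.
  move: eL e'L; rewrite !inE => le le'; exact: (Ebisp_edge_pair_le p le le').
have -> : \sum_(e in L) \sum_(e' in L)
    (n%:R^-1 / n%:R + (adjacent_edges e e')%:R / n%:R : R) =
  (\sum_(e in L) \sum_(e' in L) n%:R^-1 / n%:R) +
  \sum_(e in L) \sum_(e' in L) (adjacent_edges e e')%:R / n%:R.
  rewrite -big_split; apply: eq_bigr => e _; exact: big_split.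
have -> : \sum_(e in L) \sum_(e' in L) (n%:R^-1 / n%:R : R) = mean_load ^+ 2.
  by rewrite !sumr_const /mean_load; ring.
rewrite lerD2l.
apply: le_trans (_ : \sum_(e in L) 4 * #|V|%:R / n%:R <= _).
  apply: ler_sum => e _; rewrite -mulr_suml ler_wpM2r ?invr_ge0 ?ler0n //.
  apply: le_trans (ler_sum_pred _ _) _ => [e'|]; first exact: ler0n.
  by rewrite sum_indicator -natrM ler_nat card_adjacent_edges.
apply: le_trans (ler_sum_pred _ _) _ => [e|]; first by rewrite mulr_ge0 ?invr_ge0.
by rewrite [leLHS](_ : _ = 4 * #|V|%:R * #|E|%:R / n%:R) // sumr_const card_edge; ring.
Qed.

Lemma Ebisp_part_load_dev p :
  Ebisp (fun f => (part_load p f - mean_load) ^+ 2) <= 4 * #|V|%:R * #|E|%:R / n%:R.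
Proof.
have -> : (fun f => (part_load p f - mean_load) ^+ 2) = (fun f =>
    part_load p f ^+ 2 + ((- 2 * mean_load) * part_load p f + mean_load ^+ 2 * 1)).
  by apply/funext => f; ring.
rewrite !EbispD !EbispZ Ebisp1 Ebisp_part_load.
have := Ebisp_part_load_sq p; lra.
Qed.

Lemma exists_part_load_dev eps (f : partitioning) : (0 < #|E|)%N ->
  #|V|%:R <= eps * #|E|%:R / (2 * n%:R) -> 1 + eps < ib R f ->
  exists p, eps * #|E|%:R / (2 * n%:R) <= part_load p f - mean_load.
Proof.
move=> E_gt0 V_le ib_gt.
have n_gt0R : (0 : R) < n%:R by rewrite ltr0n n_gt0.
have I_n_gt0 : (0 < #|'I_n|)%N by rewrite card_ord n_gt0.
have [p max_p] := bigop.eq_bigmax (fun p : 'I_n => #|[set e | f e == p]|) I_n_gt0.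
exists p.
pose K : R := #|E|%:R / n%:R.
have count_gt : (1 + eps) * K < #|[set e | f e == p]|%:R.
  by move: ib_gt; rewrite /ib max_p ltr_pdivlMr // divr_gt0 // ltr0n.
have count_le : #|[set e | f e == p]|%:R <= part_load p f + #|V|%:R.
  rewrite -sum_indicator (bigID (mem loopfree_edges)) /= lerD2l big_mkcond /=.
  apply: le_trans (_ : \sum_e ((src e == dst e)%:R : R) <= _).
    apply: ler_sum => e _; rewrite inE negbK.
    by case: ifP => _; rewrite ?lern1 ?leq_b1.
  by rewrite sum_indicator ler_nat card_loops.
have mean_le : mean_load <= K.
  by rewrite ler_wpM2r ?invr_ge0 ?ler0n // ler_nat -card_edge max_card.
have dE : eps * #|E|%:R / (2 * n%:R) = eps * K / 2 by rewrite /K; field; rewrite gt_eqF.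
rewrite dE in V_le *; have : (1 + eps) * K = K + eps * K by ring.
lra.
Qed.

Lemma bisp_prob_le1 (A : pred partitioning) : bisp_prob w s A <= 1.
Proof.
rewrite bisp_probE -[leRHS]Ebisp1; apply: Ebisp_le => f.
by rewrite lern1 leq_b1.
Qed.

Lemma bisp_prob_ib_le eps : 0 < eps -> (0 < #|E|)%N ->
  2 * (n%:R ^+ 2 / (#|E|%:R / #|V|%:R)) <= eps ->
  1 - bisp_prob w s (fun f : partitioning => ib R f <= 1 + eps)
    <= 16 * (n%:R ^+ 2 / (#|E|%:R / #|V|%:R)) / eps ^+ 2.
Proof.
have -> : n%:R ^+ 2 / (#|E|%:R / #|V|%:R) = n%:R ^+ 2 * #|V|%:R / #|E|%:R :> R.
  by rewrite invf_div mulrA.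
move=> eps_gt0 E_gt0 r_le.
have n_gt0R : (0 : R) < n%:R by rewrite ltr0n n_gt0.
have E_gt0R : (0 : R) < #|E|%:R by rewrite ltr0n.
pose d := eps * #|E|%:R / (2 * n%:R).
have d_gt0 : 0 < d by rewrite /d divr_gt0 ?mulr_gt0.
have V_le : #|V|%:R <= d.
  have n_le_sq : (n%:R : R) <= n%:R ^+ 2 by rewrite expr2 ler_peMl // ler1n n_gt0.
  rewrite /d ler_pdivlMr ?mulr_gt0 //.
  move: r_le; rewrite mulrA ler_pdivrMr // => r_le.
  by apply: le_trans r_le; rewrite mulrC -mulrA ler_wpM2l // ler_wpM2r.
rewrite bisp_probE.
have -> : 1 - Ebisp (fun f : partitioning => (ib R f <= 1 + eps)%R%:R) =
    Ebisp (fun f : partitioning => 1 + (-1) * (ib R f <= 1 + eps)%R%:R).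
  by rewrite EbispD EbispZ Ebisp1 mulN1r.
apply: le_trans (_ : Ebisp (fun f => \sum_p d^-2 * (part_load p f - mean_load) ^+ 2) <= _).
  apply: Ebisp_le => f; case: (boolP (ib R f <= 1 + eps)%R) => [_|ib_gt].
    by rewrite mulr1 subrr sumr_ge0 // => p _; rewrite mulr_ge0 ?invr_ge0 ?sqr_ge0.
  rewrite mulr0 addr0; move: ib_gt; rewrite -ltNge.
  case/(exists_part_load_dev E_gt0 V_le) => p dev.
  rewrite (bigD1 p) //= -[1]addr0 lerD ?sumr_ge0 // => [|q _].
    by rewrite ler_pdivlMl ?exprn_gt0 // mulr1 ler_pXn2r // ?nnegrE ltW // (lt_le_trans d_gt0).
  by rewrite mulr_ge0 ?invr_ge0 ?sqr_ge0.
rewrite Ebisp_sum; under eq_bigr do rewrite EbispZ.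
apply: le_trans (_ : \sum_(p < n) d^-2 * (4 * #|V|%:R * #|E|%:R / n%:R) <= _).
  by apply: ler_sum => p _; rewrite ler_wpM2l ?invr_ge0 ?sqr_ge0 ?Ebisp_part_load_dev.
rewrite [leLHS](_ : _ = 16 * (n%:R ^+ 2 * #|V|%:R / #|E|%:R) / eps ^+ 2) //.
by rewrite sumr_const card_ord /d; field; rewrite !gt_eqF.
Qed.

End BISP.

Local Open Scope classical_set_scope.

Lemma cvg0_sqr_div_sqrt (R : realType) (T : Type) (F : set_system T) {FF : Filter F}
    (a b : T -> R) :
  a x / Num.sqrt (b x) @[x --> F] --> 0 -> (forall x, 0 <= b x) ->
  a x ^+ 2 / b x @[x --> F] --> 0.
Proof.
move=> ab_to0 b_ge0.
have -> : (fun x => a x ^+ 2 / b x) =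
    (fun x => a x / Num.sqrt (b x)) \* (fun x => a x / Num.sqrt (b x)).
  by apply/funext => x /=; rewrite -expr2 expr_div_n sqr_sqrtr.
by rewrite -[X in _ --> X](mulr0 0); exact: cvgM.
Qed.

Theorem lemma1 (R : realType)
  (V : nat -> finType) (E : forall k, {set V k * V k})
  (n m : nat -> nat)
  (F : forall k, 'I_(m k) -> {set 'I_(n k)})
  (w : forall k, 'I_(m k) -> R)
  (s : forall k, 'I_(m k) -> 'I_(m k) -> 'I_(n k) -> R)
  (hsys : forall k, is_system (F k) (w k) (s k))
  (hbal : forall k, balanced (w k) (s k))
  (hV : (fun k => (#|V k|%:R : R)) @ \oo --> +oo)
  (hE : (fun k => (#|E k|%:R / #|V k|%:R : R)) @ \oo --> +oo)
  (hn : (fun k => ((n k)%:R / Num.sqrt (#|E k|%:R / #|V k|%:R) : R)) @ \oo --> (0 : R)) :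
  forall eps : R, 0 < eps ->
    (fun k => (@bisp_prob R (V k) (E k) (n k) (m k) (w k) (s k) (fun f => @ib R _ (E k) (n k) f <= 1 + eps) : R)) @ \oo --> (1 : R).
Proof.
move=> eps eps_gt0.
pose r k : R := (n k)%:R ^+ 2 / (#|E k|%:R / #|V k|%:R).
have r_to0 : r @ \oo --> 0 by apply: (cvg0_sqr_div_sqrt hn) => k; rewrite divr_ge0.
apply/cvgrPdist_le => e e_gt0.
move/cvgrPdist_le: r_to0 => r_near.
have E_large := proj1 (cvgryPge _) hE 1.
near=> k.
have E_gt0 : (0 < #|E k|)%N.
  have : 1 <= #|E k|%:R / #|V k|%:R :> R by near: k; exact: E_large.
  by rewrite lt0n; apply: contraTneq => ->; rewrite mul0r ler10.
have r_le c : `|0 - r k| <= c -> r k <= c.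
  by rewrite sub0r normrN; apply: le_trans (ler_norm _).
rewrite ger0_norm ?subr_ge0 ?(bisp_prob_le1 (hsys k)) //.
apply: le_trans (bisp_prob_ib_le (hsys k) (hbal k) eps_gt0 E_gt0 _) _.
  have /r_le : `|0 - r k| <= eps / 2 by near: k; apply: r_near; rewrite divr_gt0.
  rewrite /r; lra.
rewrite ler_pdivrMr ?exprn_gt0 //.
have /r_le : `|0 - r k| <= e * eps ^+ 2 / 16.
  by near: k; apply: r_near; rewrite divr_gt0 ?mulr_gt0 ?exprn_gt0.
rewrite /r; lra.
Unshelve. all: end_near.
Qed.
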